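(* Let $K$ be a field of characteristic zero and $W_n$ the Witt Lie algebra. The set of locally finite elements of $W_n$ that are homogeneous with respect to the $\mathbb{Z}^n$-grading $W_n=\bigoplus_{\alpha\in\mathbb{Z}^n}x^\alpha\mathcal{H}_n$ equals $\mathcal{H}_n$.
   Context: $W_n=\mathrm{Der}_K(K[x_1^{\pm1},\ldots,x_n^{\pm1}])$, $x^\alpha=x_1^{\alpha_1}\cdots x_n^{\alpha_n}$, $\mathcal{H}_n=\bigoplus_{i=1}^nKH_i$ with $H_i=x_i\partial_i$; homogeneous elements are those lying in some $x^\alpha\mathcal{H}_n$. An element $a$ is locally finite if $\dim_K\sum_{i\ge0}K\,\mathrm{ad}(a)^i(b)<\infty$ for all $b\in W_n$. *)

(* Laurent polynomials K[x_1^{±1},...,x_n^{±1}] are modelled as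
   finitely supported functions from exponent vectors 'rV[int]_n to K
   (multinomials' {malg K['rV[int]_n]}), with the Laurent product defined below. *)
From HB Require Import structures.
From mathcomp Require Import all_boot all_order all_algebra.
From mathcomp Require Import finmap.
From mathcomp.multinomials Require Import monalg.
Set Implicit Arguments. Unset Strict Implicit. Unset Printing Implicit Defensive.
Import Order.TTheory GRing.Theory Num.Theory.
Local Open Scope ring_scope.

Definition laurent (n : nat) (K : fieldType) := {malg K['rV[int]_n]}.

Definition lmono (n : nat) (K : fieldType) (m : 'rV[int]_n) : laurent n K :=
  << m >>.

Definition lmul (n : nat) (K : fieldType) (f g : laurent n K) : laurent n K :=
  \sum_(m <- msupp f) \sum_(m' <- msupp g) (f@_m * g@_m') *: lmono K (m + m').

(* D is a K-derivation of the Laurent polynomial ring: K-linear + Leibniz.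
   W_n = Der_K(L_n) is the set of such maps. *)
Definition is_derivation (n : nat) (K : fieldType) (D : laurent n K -> laurent n K) :=
  (forall (c : K) (f g : laurent n K), D (c *: f + g) = c *: D f + D g) /\
  (forall f g : laurent n K, D (lmul f g) = lmul f (D g) + lmul (D f) g).

(* H_i = x_i d/dx_i :  x^m |-> m_i x^m. *)
Definition Hop (n : nat) (K : fieldType) (i : 'I_n) (f : laurent n K) : laurent n K :=
  \sum_(m <- msupp f) (((m ord0 i)%:~R : K) * f@_m) *: lmono K m.

Definition ad (n : nat) (K : fieldType) (a b : laurent n K -> laurent n K) :
  laurent n K -> laurent n K := fun f => a (b f) - b (a f).

(* a is locally finite: for every b in W_n, the span of {ad(a)^k b | k >= 0}
   is finite dimensional, i.e. contained in the span of finitely many maps. *)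
Definition locally_finite (n : nat) (K : fieldType) (a : laurent n K -> laurent n K) :=
  forall b : laurent n K -> laurent n K, is_derivation b ->
    exists (d : nat) (S : 'I_d -> laurent n K -> laurent n K),
      forall k : nat, exists lam : 'I_d -> K,
        forall f, iter k (ad a) b f = \sum_(j < d) lam j *: S j f.

Definition homogeneous (n : nat) (K : fieldType) (a : laurent n K -> laurent n K) :=
  exists (alpha : 'rV[int]_n) (c : 'I_n -> K),
    forall f, a f = \sum_(i < n) c i *: lmul (lmono K alpha) (Hop i f).

Definition in_Hn (n : nat) (K : fieldType) (a : laurent n K -> laurent n K) :=
  exists c : 'I_n -> K, forall f, a f = \sum_(i < n) c i *: Hop i f.

From HB Require Import structures.
From mathcomp Require Import all_boot all_order all_algebra.
From mathcomp Require Import finmap.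
From mathcomp.multinomials Require Import monalg.
From mathcomp Require Import ring.
Set Implicit Arguments. Unset Strict Implicit. Unset Printing Implicit Defensive.
Import Order.TTheory GRing.Theory Num.Theory.
Local Open Scope ring_scope.

(* Every derivation b of the Laurent ring is determined by its values on monomials,
   and the Leibniz rule makes m |-> (coefficient of x^(q+m) in b(x^m)) additive in m;
   hence b is a finite sum of homogeneous pieces x^d (w_1 H_1 + ... + w_n H_n).
   An element c_1 H_1 + ... + c_n H_n of H_n acts on such a piece by the scalar
   lambda(d) = c_1 d_1 + ... + c_n d_n, so it is locally finite.
   Conversely, let a = x^al (c_1 H_1 + ... + c_n H_n) with al <> 0 be locally finite and
   suppose lambda(q) <> 0.  The k-th iterate of ad a on x^be (c_1 H_1 + ... + c_n H_n),
   applied to x^q, has coefficient lambda(q) prod_(j<k) (lambda(be) + (j-1) lambda(al))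
   at x^(q + be + k al).  Choosing be = q if lambda(al) = 0 and be = 2 al otherwise, no
   factor vanishes in characteristic zero, so these iterates involve infinitely many
   distinct monomials and cannot lie in a finite-dimensional space.  Hence lambda = 0,
   so a = 0 lies in H_n. *)

Section Convolution.
Variables (V : zmodType) (R : comNzRingType).

Lemma eq_subr_addl (x y z : V) : (y == z - x) = (x + y == z).
Proof. by rewrite eq_sym subr_eq addrC eq_sym. Qed.

Lemma big_seq_kronecker (s : seq V) (F : V -> R) q :
  uniq s -> (F q != 0 -> q \in s) -> \sum_(m <- s) F m * (m == q)%:R = F q.
Proof.
move=> s_uniq q_in_s.
rewrite (eq_bigr (fun m => if m == q then F m else 0)); last first.
  by move=> m _; case: eqP; rewrite ?mulr1 ?mulr0.
rewrite -big_mkcond /=; case qs: (q \in s).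
  by rewrite -big_filter filter_pred1_uniq // big_seq1.
rewrite big1_seq; last by move=> m /andP[/eqP -> ]; rewrite qs.
by case: (F q =P 0) => [-> //|/eqP /q_in_s]; rewrite qs.
Qed.

Lemma convolutionC (s t : seq V) (F G : V -> R) r :
  uniq s -> uniq t -> (forall m, F m != 0 -> m \in s) ->
  (forall m, G m != 0 -> m \in t) ->
  \sum_(m <- s) F m * G (r - m) = \sum_(m <- t) F (r - m) * G m.
Proof.
move=> s_uniq t_uniq F_supp G_supp.
transitivity (\sum_(m <- s) \sum_(m' <- t) F m * (G m' * (m' == r - m)%:R)).
  by apply: eq_bigr => m _; rewrite -mulr_sumr big_seq_kronecker //; apply: G_supp.
transitivity (\sum_(m' <- t) \sum_(m <- s) F m * (m == r - m')%:R * G m'); last first.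
  by apply: eq_bigr => m _; rewrite -mulr_suml big_seq_kronecker //; apply: F_supp.
rewrite exchange_big /=; apply: eq_bigr => m' _; apply: eq_bigr => m _.
by rewrite !eq_subr_addl addrC; ring.
Qed.

End Convolution.

Lemma mulrn_row_inj (n : nat) (v : 'rV[int]_n) :
  v != 0 -> injective (GRing.natmul v).
Proof.
case: (pickP (fun i => v ord0 i != 0)) => [i vi_neq0 _ k1 k2 eq_vk|v_eq0].
  apply: (mulrIn vi_neq0).
  by have := congr1 (fun w : 'rV[int]_n => w ord0 i) eq_vk; rewrite /= !mulmxnE.
case/eqP; apply/matrixP => x j; rewrite (ord1 x) mxE.
by have /negbFE/eqP := v_eq0 j.
Qed.

Lemma seq_avoids_injection (T : eqType) (s : seq T) (X : nat -> T) :
  injective X -> exists k, X k \notin s.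
Proof.
move=> X_inj; set ks := iota 0 (size s).+1.
have [/allP X_in_s|/allPn[_ /mapP[k _ ->] X_notin]] := boolP (all (mem s) (map X ks)).
  have := uniq_leq_size _ X_in_s; rewrite map_inj_uniq // iota_uniq.
  by rewrite size_map size_iota ltnn => /(_ isT).
by exists k.
Qed.

Section LaurentCoefficients.
Variables (n : nat) (K : fieldType).
Local Notation M := 'rV[int]_n.
Local Notation L := (laurent n K).

Lemma lmonoE (m p : M) : (lmono K m)@_p = (m == p)%:R.
Proof. exact: mcoeffU. Qed.

Lemma mcoeff_big (I : Type) (r : seq I) (P : pred I) (F : I -> L) p :
  (\sum_(i <- r | P i) F i)@_p = \sum_(i <- r | P i) (F i)@_p.
Proof. exact: raddf_sum. Qed.

Lemma msupp_coeff (f : L) m : f@_m != 0 -> m \in msupp f.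
Proof. by rewrite mcoeff_neq0. Qed.

Lemma msupp_coeffMl (f : L) (x : K) m : x * f@_m != 0 -> m \in msupp f.
Proof. by apply: contraR => /mcoeff_outdom ->; rewrite mulr0. Qed.

Lemma msupp_coeffMr (f : L) (x : K) m : f@_m * x != 0 -> m \in msupp f.
Proof. by rewrite mulrC; apply: msupp_coeffMl. Qed.

Lemma lmulE (f g : L) p :
  (lmul f g)@_p = \sum_(m <- msupp f) f@_m * g@_(p - m).
Proof.
rewrite mcoeff_big; apply: eq_bigr => m _; rewrite mcoeff_big.
rewrite -(big_seq_kronecker (s := msupp g) (F := fun m' => f@_m * g@_m')) ?fset_uniq //;
  last exact: msupp_coeffMl.
by apply: eq_bigr => m' _; rewrite mcoeffZ lmonoE eq_subr_addl.
Qed.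

Lemma lmulEr (f g : L) p :
  (lmul f g)@_p = \sum_(m <- msupp g) f@_(p - m) * g@_m.
Proof. by rewrite lmulE (convolutionC (t := msupp g)) ?fset_uniq // => m /msupp_coeff. Qed.

Lemma lmul_monoL (al : M) (f : L) p : (lmul (lmono K al) f)@_p = f@_(p - al).
Proof.
rewrite lmulEr -(big_seq_kronecker (s := msupp f) (F := fun m => f@_m)) ?fset_uniq //.
  by apply: eq_bigr => m _; rewrite lmonoE mulrC eq_subr_addl [m + _]addrC -eq_subr_addl.
by move=> /msupp_coeff.
Qed.

Lemma lmul_monoR (al : M) (f : L) p : (lmul f (lmono K al))@_p = f@_(p - al).
Proof.
rewrite lmulE -(big_seq_kronecker (s := msupp f) (F := fun m => f@_m)) ?fset_uniq //.
  by apply: eq_bigr => m _; rewrite lmonoE eq_subr_addl [m + _]addrC -eq_subr_addl.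
by move=> /msupp_coeff.
Qed.

Lemma lmul_mono (m m' : M) : lmul (lmono K m) (lmono K m') = lmono K (m + m').
Proof. by apply/malgP => p; rewrite lmul_monoL !lmonoE eq_subr_addl. Qed.

Definition Hweight (c : 'I_n -> K) (q : M) : K := \sum_(i < n) c i * (q ord0 i)%:~R.

Lemma Hweight_is_zmod_morphism c : zmod_morphism (Hweight c).
Proof.
move=> q q'; rewrite /Hweight -sumrB; apply: eq_bigr => i _.
by rewrite !mxE intrB mulrBr.
Qed.

HB.instance Definition _ c :=
  GRing.isZmodMorphism.Build M K (Hweight c) (Hweight_is_zmod_morphism c).

Lemma HopE i (f : L) p : (Hop i f)@_p = (p ord0 i)%:~R * f@_p.
Proof.
rewrite mcoeff_big -(big_seq_kronecker (s := msupp f)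
                      (F := fun m => (m ord0 i)%:~R * f@_m)) ?fset_uniq //;
  last exact: msupp_coeffMl.
by apply: eq_bigr => m _; rewrite mcoeffZ lmonoE.
Qed.

(* [Hact] and [homder] are locked: when they are transparent, rewriting tries to unfold
   them into the sums defining [lmul] and [Hop], which is prohibitively slow. *)
Definition Hact_def (c : 'I_n -> K) (f : L) : L := \sum_(i < n) c i *: Hop i f.
Fact Hact_key : unit. Proof. by []. Qed.
Definition Hact := locked_with Hact_key Hact_def.
Canonical Hact_unlockable := [unlockable fun Hact].

Lemma Hact_sum c f : Hact c f = \sum_(i < n) c i *: Hop i f.
Proof. by rewrite unlock. Qed.

Lemma Hact_coeff c f p : (Hact c f)@_p = Hweight c p * f@_p.
Proof.
rewrite Hact_sum mcoeff_big /Hweight mulr_suml; apply: eq_bigr => i _.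
by rewrite mcoeffZ HopE mulrA.
Qed.

Definition homder_def (al : M) (c : 'I_n -> K) (f : L) : L :=
  \sum_(i < n) c i *: lmul (lmono K al) (Hop i f).
Fact homder_key : unit. Proof. by []. Qed.
Definition homder := locked_with homder_key homder_def.
Canonical homder_unlockable := [unlockable fun homder].

Lemma homder_sum al c f : homder al c f = \sum_(i < n) c i *: lmul (lmono K al) (Hop i f).
Proof. by rewrite unlock. Qed.

Lemma homderE al c f p : (homder al c f)@_p = Hweight c (p - al) * f@_(p - al).
Proof.
rewrite homder_sum mcoeff_big /Hweight mulr_suml; apply: eq_bigr => i _.
by rewrite mcoeffZ lmul_monoL HopE mulrA.
Qed.

Lemma homder0E c : homder 0 c =1 Hact c.
Proof.
move=> f; rewrite homder_sum Hact_sum; apply: eq_bigr => i _; congr (_ *: _).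
by apply/malgP => p; rewrite lmul_monoL subr0.
Qed.

Lemma homder_is_derivation al c : is_derivation (homder al c).
Proof.
split=> [k f g|f g]; apply/malgP => p.
  by rewrite !(mcoeffD, mcoeffZ, homderE) mulrDr mulrCA.
rewrite mcoeffD homderE [in X in X = _]lmulE.
rewrite [X in _ = X + _]lmulE [X in _ = _ + X]lmulEr mulr_sumr.
under [X in _ = X + _]eq_bigr => m _ do rewrite homderE (addrAC p).
under [X in _ = _ + X]eq_bigr => m _ do rewrite homderE (addrAC p).
rewrite -(convolutionC (s := msupp f) (F := fun m => Hweight c m * f@_m)) ?fset_uniq //;
  [|by move=> m /msupp_coeffMl|by move=> m /msupp_coeff].
rewrite -big_split /=; apply: eq_bigr => m _.
rewrite -{1}(subrK m (p - al)) raddfD /=; ring.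
Qed.

Section Derivation.
Variable b : L -> L.
Hypothesis Db : is_derivation b.

Lemma derivationD (f g : L) : b (f + g) = b f + b g.
Proof. by have := Db.1 1 f g; rewrite [in X in b X]scale1r [in X in _ = X]scale1r. Qed.

Lemma derivation0 : b 0 = 0.
Proof. by apply: (addrI (b 0)); rewrite -derivationD !addr0. Qed.

Lemma derivationZ (k : K) (f : L) : b (k *: f) = k *: b f.
Proof. by rewrite -[k *: f]addr0 Db.1 derivation0 addr0. Qed.

Lemma derivation_sum (I : Type) (r : seq I) (F : I -> L) :
  b (\sum_(i <- r) F i) = \sum_(i <- r) b (F i).
Proof. exact: (big_morph b derivationD derivation0). Qed.

Lemma derivation_expand (f : L) : b f = \sum_(m <- msupp f) f@_m *: b (lmono K m).
Proof.
rewrite {1}(monalgE f) derivation_sum; apply: eq_bigr => m _.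
rewrite -derivationZ; congr (b _).
by apply/malgP => p; rewrite mcoeffU mcoeffZ lmonoE mulr_natr.
Qed.

Definition der_coef (q m : M) : K := (b (lmono K m))@_(q + m).

Lemma der_coefD q m m' : der_coef q (m + m') = der_coef q m + der_coef q m'.
Proof.
rewrite /der_coef -lmul_mono Db.2 mcoeffD addrC; congr (_ + _).
  by rewrite lmul_monoR addrA addrK.
by rewrite lmul_monoL (addrC m) addrA addrK.
Qed.

Lemma der_coef_is_zmod_morphism q : zmod_morphism (der_coef q).
Proof. by move=> m m'; apply/eqP; rewrite eq_sym subr_eq -der_coefD subrK. Qed.

HB.instance Definition _ q :=
  GRing.isZmodMorphism.Build M K (der_coef q) (der_coef_is_zmod_morphism q).

Definition der_weight (q : M) (j : 'I_n) : K := der_coef q 'e_j.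

Lemma der_coef_Hweight q m : der_coef q m = Hweight (der_weight q) m.
Proof.
rewrite {1}(row_sum_delta m) raddf_sum; apply: eq_bigr => j _.
by rewrite -[m 0 j in LHS]intz scaler_int raddfMz mulrzr.
Qed.

Lemma derivation_mono_coeff m p : (b (lmono K m))@_p = Hweight (der_weight (p - m)) m.
Proof. by rewrite -der_coef_Hweight /der_coef subrK. Qed.

Definition der_degrees : seq M := undup (flatten
  [seq [seq q - 'e_i | q <- (msupp (b (lmono K 'e_i)) : seq M)] | i <- enum 'I_n]).

Lemma der_degreesP q i : der_weight q i != 0 -> q \in der_degrees.
Proof.
rewrite /der_weight /der_coef => /msupp_coeff q_in; rewrite mem_undup; apply/flattenP.
exists [seq q - 'e_i | q <- (msupp (b (lmono K 'e_i)) : seq M)].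
  by apply/mapP; exists i; rewrite ?mem_enum.
by apply/mapP; exists (q + 'e_i); rewrite ?addrK.
Qed.

Lemma derivation_decomp (f : L) :
  b f = \sum_(d <- der_degrees) homder d (der_weight d) f.
Proof.
apply/malgP => p; rewrite derivation_expand !mcoeff_big.
transitivity (\sum_(j < n) \sum_(m <- msupp f)
                (f@_m * (m ord0 j)%:~R) * der_weight (p - m) j).
  rewrite exchange_big /=; apply: eq_bigr => m _.
  rewrite mcoeffZ derivation_mono_coeff /Hweight mulr_sumr.
  by apply: eq_bigr => j _; rewrite mulrA mulrAC.
transitivity (\sum_(j < n) \sum_(d <- der_degrees)
                (f@_(p - d) * ((p - d) ord0 j)%:~R) * der_weight d j).
  apply: eq_bigr => j _; apply: convolutionC; rewrite ?fset_uniq ?undup_uniq //.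
    by move=> m /msupp_coeffMr.
  by move=> d /der_degreesP.
rewrite exchange_big /=; apply: eq_bigr => d _.
rewrite homderE /Hweight mulr_suml; apply: eq_bigr => j _; ring.
Qed.

End Derivation.

Lemma Hact_is_derivation c : is_derivation (Hact c).
Proof.
have [lin leibniz] := homder_is_derivation 0 c.
by split=> *; rewrite -!homder0E; [apply: lin | apply: leibniz].
Qed.

Lemma eq_iter_ad (a a' b b' : L -> L) : a =1 a' -> b =1 b' ->
  forall k, iter k (ad a) b =1 iter k (ad a') b'.
Proof. by move=> eq_a eq_b; elim=> [|k IH] f //=; rewrite /ad !IH !eq_a. Qed.

Lemma ad_Hact_homder c d w f :
  ad (Hact c) (homder d w) f = Hweight c d *: homder d w f.
Proof.
apply/malgP => p; rewrite mcoeffB mcoeffZ Hact_coeff !homderE Hact_coeff.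
by rewrite raddfB /=; ring.
Qed.

Lemma iter_ad_Hact c (s : seq M) (w : M -> 'I_n -> K) (b : L -> L) :
  (forall f, b f = \sum_(d <- s) homder d (w d) f) ->
  forall k f, iter k (ad (Hact c)) b f =
              \sum_(d <- s) Hweight c d ^+ k *: homder d (w d) f.
Proof.
have Dc := Hact_is_derivation c.
move=> b_sum; elim=> [|k IH] f /=.
  by rewrite b_sum; apply: eq_bigr => d _; rewrite expr0 scale1r.
rewrite /ad !IH (derivation_sum Dc) -sumrB; apply: eq_bigr => d _.
by rewrite (derivationZ Dc) -scalerBr -/(ad _ _ f) ad_Hact_homder scalerA exprS mulrC.
Qed.

Lemma iter_ad_homder al be c k f q :
  (iter k (ad (homder al c)) (homder be c) f)@_(q + be + al *+ k) =
  \prod_(j < k) (Hweight c be + Hweight c al *+ j - Hweight c al) *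
  Hweight c q * f@_q.
Proof.
elim: k f q => [|k IH] f q.
  by rewrite /= big_ord0 mulr0n addr0 homderE addrK mul1r.
have shift1 : q + be + al *+ k.+1 - al = q + be + al *+ k.
  by rewrite mulrS (addrC al) addrA addrK.
have shift2 : q + be + al *+ k.+1 = q + al + be + al *+ k.
  by rewrite mulrS addrA (addrAC q be al).
rewrite iterS /ad mcoeffB homderE shift1 shift2 !IH homderE addrK big_ord_recr /=.
rewrite !raddfD raddfMn /=; ring.
Qed.

End LaurentCoefficients.

Section LocalFiniteness.
Variables (n : nat) (K : fieldType).
Local Notation M := 'rV[int]_n.
Local Notation L := (laurent n K).

Lemma eq_locally_finite (a a' : L -> L) :
  a =1 a' -> locally_finite a -> locally_finite a'.
Proof.
move=> eq_a lf_a b Db; have [d [S S_span]] := lf_a b Db.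
exists d, S => k; have [lam lam_span] := S_span k.
by exists lam => f; rewrite -(eq_iter_ad eq_a (frefl b)).
Qed.

Lemma locally_finite_msupp (a b : L -> L) (g : L) :
  locally_finite a -> is_derivation b ->
  exists T : seq M, forall k p, (iter k (ad a) b g)@_p != 0 -> p \in T.
Proof.
move=> lf_a Db; have [d [S S_span]] := lf_a b Db.
exists (flatten [seq (msupp (S j g) : seq M) | j <- enum 'I_d]) => k p.
have [lam ->] := S_span k; rewrite mcoeff_big.
apply: contraR => p_notin; apply/eqP; apply: big1 => j _.
rewrite mcoeffZ mcoeff_outdom ?mulr0 //; apply: contra p_notin => p_in.
apply/flattenP; exists (msupp (S j g) : seq M) => //.
by apply/mapP; exists j; rewrite ?mem_enum.
Qed.

Lemma locally_finite_Hact (c : 'I_n -> K) : locally_finite (Hact c).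
Proof.
move=> b Db; set s := der_degrees b.
exists (size s), (fun j => homder (tnth (in_tuple s) j) (der_weight b (tnth (in_tuple s) j))).
move=> k; exists (fun j => Hweight c (tnth (in_tuple s) j) ^+ k) => f.
by rewrite (iter_ad_Hact _ (derivation_decomp Db)) big_tnth.
Qed.

Lemma homder_Hweight_eq0 (al : M) (c : 'I_n -> K) :
  [pchar K] =i pred0 -> al != 0 -> locally_finite (homder al c) ->
  forall q, Hweight c q = 0.
Proof.
move=> charK0 al_neq0 lf q0; apply/eqP; apply: contraT => wq0_neq0.
pose la := Hweight c al; pose be := if la == 0 then q0 else al + al.
(* The [j]-th factor in [iter_ad_homder] is then [Hweight c q0] or [j.+1 * la]. *)
have fac_neq0 j : Hweight c be + la *+ j - la != 0.
  rewrite /be; have [la0|la_neq0] := eqVneq la 0.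
    by rewrite la0 mul0rn addr0 subr0.
  rewrite raddfD /= -/la addrAC addrK -mulrS -mulr_natl mulf_neq0 //.
  by rewrite ((pcharf0P K).1 charK0).
pose X k := q0 + be + al *+ k.
have X_inj : injective X by move=> k1 k2 /addrI /(mulrn_row_inj al_neq0).
have [T T_supp] := locally_finite_msupp (lmono K q0) lf (homder_is_derivation be c).
have [k /negbTE <-] := seq_avoids_injection T X_inj; apply: (T_supp k).
rewrite iter_ad_homder lmonoE eqxx mulr1 mulf_neq0 //.
by apply/prodf_neq0 => j _; apply: fac_neq0.
Qed.

End LocalFiniteness.

Theorem lemma2p4 (n : nat) (K : fieldType) (charK0 : [pchar K] =i pred0)
  (a : laurent n K -> laurent n K) (Da : is_derivation a) :
  (homogeneous a /\ locally_finite a) <-> in_Hn a.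
Proof.
split=> [[[al [c a_hom]] lf_a]|[c a_Hsum]]; last first.
  have a_Hact : Hact c =1 a by move=> f; rewrite a_Hsum Hact_sum.
  split; last exact: eq_locally_finite a_Hact (locally_finite_Hact c).
  by exists 0, c => f; rewrite -a_Hact -homder0E homder_sum.
have a_homder : a =1 homder al c by move=> f; rewrite a_hom homder_sum.
exists c => f; rewrite a_homder -Hact_sum -homder0E.
have [-> //|al_neq0] := eqVneq al 0.
have w0 := homder_Hweight_eq0 charK0 al_neq0 (eq_locally_finite a_homder lf_a).
by apply/malgP => p; rewrite !homderE !w0 !mul0r.
Qed.
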